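(* Each of GVC, GVC1 and GVC2 is equivalent to the unconstrained binary quadratic programming problem UBQP: every instance of one can be formulated as an instance of the other such that an optimal solution of the new instance yields an optimal solution of the original instance (identifying $U\subseteq\{1,\dots,n\}$ with its incidence vector $x\in\{0,1\}^n$).
   Context: Let $G=(V,E)$ be a graph with $V=\{1,\dots,n\}$, vertex weights $c_i\in\mathbb{R}$ and edge weights $q^0_{ij},q^1_{ij},q^2_{ij}\in\mathbb{R}$. For $U\subseteq V$ let $E_0(U)$, $E_1(U)$, $E_2(U)$ be the sets of edges with zero, exactly one, and two endpoints in $U$, respectively, and $f(U)=\sum_{i\in U}c_i+\sum_{E_0(U)}q^0_{ij}+\sum_{E_1(U)}q^1_{ij}+\sum_{E_2(U)}q^2_{ij}$. GVC asks for $U\subseteq V$ minimizing $f(U)$; GVC1 is the special case $q^1\equiv q^2\equiv0$, GVC2 the special case $q^0\equiv q^1\equiv 0$. UBQP: given a symmetric real $n\times n$ matrix $Q=(q_{ij})$ with zero diagonal and a vector $a\in\mathbb{R}^n$, find $x\in\{0,1\}^n$ minimizing $\sum_i a_ix_i+\sum_{i=1}^n\sum_{j=1}^n q_{ij}x_ix_j$. Two problems are equivalent if each can be formulated as the other so that an optimal solution of the formulated instance gives an optimal solution of the original. *)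

From HB Require Import structures.
From mathcomp Require Import all_boot all_order all_algebra.
Set Implicit Arguments. Unset Strict Implicit. Unset Printing Implicit Defensive.
Import Order.TTheory GRing.Theory Num.Theory.
Local Open Scope ring_scope.

Section GVC.
Variables (R : realFieldType) (n : nat).

(* A simple graph on V = {1,...,n} (represented by 'I_n): a symmetric,
   irreflexive adjacency relation.  The edge {i,j} is the pair (i,j), i < j. *)
Definition simple_graph (e : rel 'I_n) : Prop := irreflexive e /\ symmetric e.

Definition gvc_obj (e : rel 'I_n) (c : 'I_n -> R) (q0 q1 q2 : 'I_n -> 'I_n -> R)
    (U : {set 'I_n}) : R :=
  \sum_(i in U) c i
  + \sum_(p : 'I_n * 'I_n | ((p.1 < p.2)%N && e p.1 p.2))
      (if (p.1 \in U) && (p.2 \in U) then q2 p.1 p.2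
       else if (p.1 \notin U) && (p.2 \notin U) then q0 p.1 p.2
       else q1 p.1 p.2).

Definition gvc_opt e c q0 q1 q2 (U : {set 'I_n}) : Prop :=
  forall U' : {set 'I_n}, gvc_obj e c q0 q1 q2 U <= gvc_obj e c q0 q1 q2 U'.

Definition ubqp_inst (Q : 'M[R]_n) : Prop := Q^T = Q /\ forall i, Q i i = 0.

Definition ubqp_obj (Q : 'M[R]_n) (a : 'rV[R]_n) (x : 'I_n -> bool) : R :=
  \sum_i a 0 i * (x i)%:R + \sum_i \sum_j Q i j * (x i)%:R * (x j)%:R.

Definition ubqp_opt Q a (x : 'I_n -> bool) : Prop :=
  forall x' : 'I_n -> bool, ubqp_obj Q a x <= ubqp_obj Q a x'.

End GVC.

Inductive gvc_kind := GVC | GVC1 | GVC2.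

Definition in_kind (R : realFieldType) (n : nat) (k : gvc_kind)
    (q0 q1 q2 : 'I_n -> 'I_n -> R) : Prop :=
  match k with
  | GVC => True
  | GVC1 => q1 = (fun _ _ => 0) /\ q2 = (fun _ _ => 0)
  | GVC2 => q0 = (fun _ _ => 0) /\ q1 = (fun _ _ => 0)
  end.

Definition gvc_to_ubqp (R : realFieldType) (n : nat) (k : gvc_kind) : Prop :=
  forall (e : rel 'I_n) (c : 'I_n -> R) (q0 q1 q2 : 'I_n -> 'I_n -> R),
    simple_graph e -> in_kind k q0 q1 q2 ->
    exists (Q : 'M[R]_n) (a : 'rV[R]_n) (K : R),
      ubqp_inst Q /\
      (forall U : {set 'I_n}, gvc_obj e c q0 q1 q2 U = ubqp_obj Q a (fun i => i \in U) + K) /\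
      (forall U : {set 'I_n}, ubqp_opt Q a (fun i => i \in U) -> gvc_opt e c q0 q1 q2 U).

Definition ubqp_to_gvc (R : realFieldType) (n : nat) (k : gvc_kind) : Prop :=
  forall (Q : 'M[R]_n) (a : 'rV[R]_n),
    ubqp_inst Q ->
    exists (e : rel 'I_n) (c : 'I_n -> R) (q0 q1 q2 : 'I_n -> 'I_n -> R) (K : R),
      simple_graph e /\ in_kind k q0 q1 q2 /\
      (forall x : 'I_n -> bool, ubqp_obj Q a x = gvc_obj e c q0 q1 q2 [set i | x i] + K) /\
      (forall x : 'I_n -> bool, gvc_opt e c q0 q1 q2 [set i | x i] -> ubqp_opt Q a x).

(** Every objective considered is a quadratic pseudo-Boolean function
    [K + sum_i a_i x_i + sum_(i<j) b_ij x_i x_j]. For GVC this follows from the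
    identity, valid for [x_i, x_j] in {0, 1},
    [edge cost = q0 + (q1 - q0) (x_i + x_j) + (q2 + q0 - 2 q1) x_i x_j],
    whose linear part is absorbed into the vertex weights; for UBQP it is the
    symmetry of [Q]. Conversely such a function is a UBQP objective with
    [Q_ij = Q_ji = b_ij / 2], a GVC2 objective on the complete graph with
    [q2 = b], and, expanding [x_i x_j = (1 - x_i)(1 - x_j) - 1 + x_i + x_j],
    a GVC1 objective on the complete graph with [q0 = b]. Objectives that agree
    up to an additive constant have the same minimisers. *)
From mathcomp Require Import all_boot all_order all_algebra ring.
Set Implicit Arguments. Unset Strict Implicit. Unset Printing Implicit Defensive.
Import Order.TTheory GRing.Theory Num.Theory.
Local Open Scope ring_scope.

Section QuadraticPseudoBoolean.
Variables (R : realFieldType) (n : nat).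
Implicit Types (a : 'I_n -> R) (b : 'I_n -> 'I_n -> R) (x : 'I_n -> bool).

Definition quad_obj a b x : R :=
  \sum_(i < n) a i * (x i)%:R
  + \sum_(i < n) \sum_(j < n) (if (i < j)%N then b i j * (x i)%:R * (x j)%:R else 0).

Lemma eq_quad_obj a a' b b' x x' :
  a =1 a' -> (forall i j : 'I_n, (i < j)%N -> b i j = b' i j) -> x =1 x' ->
  quad_obj a b x = quad_obj a' b' x'.
Proof.
move=> eq_a eq_b eq_x; rewrite /quad_obj.
congr (_ + _); apply: eq_bigr => i _; first by rewrite eq_a eq_x.
apply: eq_bigr => j _; case: ifP => // lt_ij.
by rewrite eq_b // !eq_x.
Qed.

Lemma sum_offdiag (F : 'I_n -> 'I_n -> R) : (forall i, F i i = 0) ->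
  \sum_(i < n) \sum_(j < n) F i j
  = \sum_(i < n) \sum_(j < n) (if (i < j)%N then F i j + F j i else 0).
Proof.
move=> F_diag.
transitivity (\sum_(i < n) \sum_(j < n) ((if (i < j)%N then F i j else 0)
                             + (if (j < i)%N then F i j else 0))).
  apply: eq_bigr => i _; apply: eq_bigr => j _.
  by case: ltngtP => [||/ord_inj->]; rewrite ?addr0 ?add0r ?F_diag.
under eq_bigr do rewrite big_split.
rewrite big_split /= [X in _ + X]exchange_big -big_split /=.
apply: eq_bigr => i _; rewrite -big_split /=; apply: eq_bigr => j _.
by case: ifP; rewrite ?addr0.
Qed.

Lemma sum_pair_cond (P : 'I_n -> 'I_n -> bool) (F : 'I_n -> 'I_n -> R) :
  \sum_(p : 'I_n * 'I_n | P p.1 p.2) F p.1 p.2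
  = \sum_(i < n) \sum_(j < n) (if P i j then F i j else 0).
Proof. by rewrite big_mkcond pair_bigA. Qed.

Definition sym_triu b (i j : 'I_n) : R :=
  if (i < j)%N then b i j else if (j < i)%N then b j i else 0.

Lemma sym_triu_diag b i : sym_triu b i i = 0.
Proof. by rewrite /sym_triu ltnn. Qed.

Lemma sym_triu_lt b (i j : 'I_n) : (i < j)%N -> sym_triu b i j = b i j.
Proof. by rewrite /sym_triu => ->. Qed.

Lemma sym_triu_gt b (i j : 'I_n) : (j < i)%N -> sym_triu b i j = b j i.
Proof. by move=> lt_ji; rewrite /sym_triu ltnNge (ltnW lt_ji) lt_ji. Qed.

Lemma sum_sym_triu_linear b x :
  \sum_(i < n) (\sum_(j < n) sym_triu b i j) * (x i)%:R
  = \sum_(i < n) \sum_(j < n) (if (i < j)%N then b i j * ((x i)%:R + (x j)%:R) else 0).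
Proof.
under eq_bigr do rewrite big_distrl /=.
rewrite sum_offdiag => [|i]; last by rewrite sym_triu_diag mul0r.
apply: eq_bigr => i _; apply: eq_bigr => j _; case: ifP => // lt_ij.
by rewrite sym_triu_lt // sym_triu_gt // mulrDr.
Qed.

End QuadraticPseudoBoolean.

Section UBQP.
Variables (R : realFieldType) (n : nat).

Lemma ubqp_obj_quad (Q : 'M[R]_n) a x : ubqp_inst Q ->
  ubqp_obj Q a x = quad_obj (a 0) (fun i j => Q i j *+ 2) x.
Proof.
move=> [Q_sym Q_diag]; rewrite /ubqp_obj /quad_obj.
rewrite sum_offdiag => [|i]; last by rewrite Q_diag !mul0r.
congr (_ + _); apply: eq_bigr => i _; apply: eq_bigr => j _; case: ifP => // _.
have -> : Q j i = Q i j by rewrite -{2}Q_sym mxE.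
ring.
Qed.

Definition ubqp_of_quad (b : 'I_n -> 'I_n -> R) : 'M[R]_n :=
  \matrix_(i, j) (sym_triu b i j / 2).

Lemma ubqp_inst_of_quad b : ubqp_inst (ubqp_of_quad b).
Proof.
split; last by move=> i; rewrite mxE sym_triu_diag mul0r.
by apply/matrixP => i j; rewrite !mxE /sym_triu; case: ltngtP.
Qed.

Lemma ubqp_obj_of_quad a b x :
  ubqp_obj (ubqp_of_quad b) (\row_i a i) x = quad_obj a b x.
Proof.
rewrite ubqp_obj_quad; last exact: ubqp_inst_of_quad.
apply: eq_quad_obj => // [i|i j lt_ij]; rewrite !mxE //.
by rewrite sym_triu_lt // mulr2n -splitr.
Qed.

End UBQP.

Section GVC.
Variables (R : realFieldType) (n : nat).
Variables (e : rel 'I_n) (c : 'I_n -> R) (q0 q1 q2 : 'I_n -> 'I_n -> R).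

Definition gvc_lin (i : 'I_n) : R :=
  c i + \sum_(j < n) sym_triu (fun i j => if e i j then q1 i j - q0 i j else 0) i j.

Definition gvc_quad (i j : 'I_n) : R :=
  if e i j then q2 i j + q0 i j - q1 i j *+ 2 else 0.

Definition gvc_const : R :=
  \sum_(i < n) \sum_(j < n) (if (i < j)%N && e i j then q0 i j else 0).

Lemma gvc_obj_quad (U : {set 'I_n}) :
  gvc_obj e c q0 q1 q2 U = quad_obj gvc_lin gvc_quad (fun i => i \in U) + gvc_const.
Proof.
rewrite /gvc_obj (sum_pair_cond (fun i j => (i < j)%N && e i j)
  (fun i j => if (i \in U) && (j \in U) then q2 i j
              else if (i \notin U) && (j \notin U) then q0 i j else q1 i j)).
rewrite /quad_obj /gvc_lin /gvc_const.
under [in RHS]eq_bigr do rewrite mulrDl.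
rewrite big_split /= sum_sym_triu_linear -!addrA; congr (_ + _).
  by rewrite big_mkcond; apply: eq_bigr => i _; case: (i \in U); rewrite ?mulr1 ?mulr0.
rewrite -!big_split /=; apply: eq_bigr => i _.
rewrite -!big_split /=; apply: eq_bigr => j _.
rewrite /gvc_quad; case: (i < j)%N; case: (e i j); rewrite /= ?mul0r ?addr0 //.
by case: (i \in U); case: (j \in U) => /=; ring.
Qed.

End GVC.

Section CompleteGraph.
Variables (R : realFieldType) (n : nat).
Implicit Types (a : 'I_n -> R) (b : 'I_n -> 'I_n -> R) (x : 'I_n -> bool).

Definition complete_graph : rel 'I_n := fun i j => i != j.

Lemma simple_complete_graph : simple_graph complete_graph.
Proof. by split=> [i | i j]; rewrite /complete_graph ?eqxx // eq_sym. Qed.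

Lemma complete_graph_lt (i j : 'I_n) : (i < j)%N -> complete_graph i j.
Proof. by move=> lt_ij; rewrite /complete_graph neq_ltn lt_ij. Qed.

Lemma quad_obj_gvc2 a b x :
  quad_obj a b x = gvc_obj complete_graph a (fun _ _ => 0) (fun _ _ => 0) b [set i | x i].
Proof.
rewrite gvc_obj_quad /gvc_const big1 ?addr0 => [|i _]; last first.
  by apply: big1 => j _; case: ifP.
apply: eq_quad_obj => [i | i j lt_ij | i]; last by rewrite inE.
  rewrite /gvc_lin big1 ?addr0 // => j _.
  by rewrite /sym_triu; do 3?case: ifP; rewrite ?subr0.
by rewrite /gvc_quad complete_graph_lt // addr0 mul0rn subr0.
Qed.

Lemma quad_obj_gvc1 a b x :
  quad_obj a b x
  = gvc_obj complete_graph (fun i => a i + \sum_(j < n) sym_triu b i j) b (fun _ _ => 0)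
      (fun _ _ => 0) [set i | x i]
    - \sum_(i < n) \sum_(j < n) (if (i < j)%N then b i j else 0).
Proof.
rewrite gvc_obj_quad.
have -> : gvc_const complete_graph b
          = \sum_(i < n) \sum_(j < n) (if (i < j)%N then b i j else 0).
  apply: eq_bigr => i _; apply: eq_bigr => j _.
  by case: ltnP => [/complete_graph_lt->|].
rewrite addrK.
apply: eq_quad_obj => [i | i j lt_ij | i]; last by rewrite inE.
  rewrite /gvc_lin -addrA -big_split /= big1 ?addr0 // => j _.
  rewrite /sym_triu; case: ltngtP => [lt_ij | lt_ji | _]; rewrite ?addr0 //;
    by rewrite complete_graph_lt // sub0r addrN.
by rewrite /gvc_quad complete_graph_lt // add0r mul0rn subr0.
Qed.

End CompleteGraph.

Arguments complete_graph {n}.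

Lemma gvc_reduces_to_ubqp (R : realFieldType) (n : nat) (k : gvc_kind) : gvc_to_ubqp R n k.
Proof.
move=> e c q0 q1 q2 _ _.
exists (ubqp_of_quad (gvc_quad e q0 q1 q2)), (\row_i gvc_lin e c q0 q1 i), (gvc_const e q0).
have objE U : gvc_obj e c q0 q1 q2 U
  = ubqp_obj (ubqp_of_quad (gvc_quad e q0 q1 q2)) (\row_i gvc_lin e c q0 q1 i)
      (fun i => i \in U) + gvc_const e q0.
  by rewrite ubqp_obj_of_quad gvc_obj_quad.
split; first exact: ubqp_inst_of_quad.
split=> [// | U U_opt U']; rewrite !objE lerD2r; exact: U_opt.
Qed.

Lemma ubqp_reduces_to_gvc (R : realFieldType) (n : nat) (k : gvc_kind) : ubqp_to_gvc R n k.
Proof.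
move=> Q a Q_inst; set b := fun i j => Q i j *+ 2.
have [c [q0 [q1 [q2 [K [q_kind objE]]]]]] :
    exists (c : 'I_n -> R) (q0 q1 q2 : 'I_n -> 'I_n -> R) (K : R),
    in_kind k q0 q1 q2 /\ forall x : 'I_n -> bool,
      quad_obj (a 0) b x = gvc_obj complete_graph c q0 q1 q2 [set i | x i] + K.
  case: k.
  - by exists (a 0), (fun _ _ => 0), (fun _ _ => 0), b, 0; split=> // x;
      rewrite addr0 quad_obj_gvc2.
  - by do 5!eexists; split; last by move=> x; rewrite quad_obj_gvc1.
  - by exists (a 0), (fun _ _ => 0), (fun _ _ => 0), b, 0; split=> // x;
      rewrite addr0 quad_obj_gvc2.
have ubqpE x : ubqp_obj Q a x = gvc_obj complete_graph c q0 q1 q2 [set i | x i] + K.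
  by rewrite ubqp_obj_quad // objE.
exists complete_graph, c, q0, q1, q2, K.
split; first exact: simple_complete_graph.
do 2!split=> //; move=> x x_opt x'; rewrite !ubqpE lerD2r; exact: x_opt.
Qed.

Theorem theorem2 (R : realFieldType) (n : nat) (k : gvc_kind) :
  gvc_to_ubqp R n k /\ ubqp_to_gvc R n k.
Proof. by split; [apply: gvc_reduces_to_ubqp | apply: ubqp_reduces_to_gvc]. Qed.
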